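(* Let $L$ be a totally ordered normal incline and let $A$ be an $n\times n$ completely positive matrix over $L$. Then $\mathrm{CP\text{-}rank}(A)\le n$ for $n=2,3$.
   Context: An incline is a nonempty set $L$ with binary operations $\oplus,\otimes$ such that $(L,\oplus)$ is a semilattice ($\oplus$ associative, commutative, idempotent), $(L,\otimes)$ is a semigroup, $x\otimes(y\oplus z)=(x\otimes y)\oplus(x\otimes z)$ and $x\oplus(x\otimes y)=x$ for all $x,y,z$. The order is $x\le y\iff x\oplus y=y$; $L$ is totally ordered if this order is total, and commutative if $\otimes$ is commutative. An r-ideal is a nonempty $J\subseteq L$ closed under $\oplus$ and under multiplication by arbitrary elements of $L$; a lattice ideal is a nonempty $J\subseteq L$ closed under $\oplus$ and downward closed. A commutative incline $L$ is normal if it has an additive identity $\mathbf{0}$ and a multiplicative identity $\mathbf{1}$ and: every singly generated r-ideal is a lattice ideal (LI-property); for each $x\in L$ there is a unique $c$ with $c\otimes c=x$ (unique square root property); $x\otimes y\le(x\otimes x)\oplus(y\otimes y)$ for all $x,y$ (AG-property). Matrix product: $(BC)_{ij}=\bigoplus_k b_{ik}\otimes c_{kj}$; $B^T$ is the transpose. $A$ is completely positive if $A=BB^T$ for some $n\times k$ matrix $B$ over $L$ all of whose entries are of the form $c\otimes c$. The CP-rank of a completely positive $A$ is the smallest $k$ such that $A=BB^T$ with $B$ an $n\times k$ matrix over $L$. *)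

From mathcomp Require Import all_boot.
Set Implicit Arguments. Unset Strict Implicit. Unset Printing Implicit Defensive.

Section Incline.
Variables (T : Type) (add mul : T -> T -> T).

Definition is_incline : Prop :=
  (forall x y z, add x (add y z) = add (add x y) z) /\
  (forall x y, add x y = add y x) /\
  (forall x, add x x = x) /\
  (forall x y z, mul x (mul y z) = mul (mul x y) z) /\
  (forall x y z, mul x (add y z) = add (mul x y) (mul x z)) /\
  (forall x y, add x (mul x y) = x).

Definition ile (x y : T) : Prop := add x y = y.

Definition totally_ordered : Prop := forall x y, ile x y \/ ile y x.

Definition commutative_incline : Prop := forall x y, mul x y = mul y x.

Definition r_ideal (J : T -> Prop) : Prop :=
  (exists x, J x) /\
  (forall x y, J x -> J y -> J (add x y)) /\
  (forall x a, J x -> J (mul a x) /\ J (mul x a)).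

Definition lattice_ideal (J : T -> Prop) : Prop :=
  (exists x, J x) /\
  (forall x y, J x -> J y -> J (add x y)) /\
  (forall x y, J x -> ile y x -> J y).

Definition gen_r_ideal (a : T) : T -> Prop :=
  fun x => forall J, r_ideal J -> J a -> J x.

Definition LI_property : Prop := forall a, lattice_ideal (gen_r_ideal a).

Definition unique_sqrt_property : Prop :=
  forall x, exists c, mul c c = x /\ forall d, mul d d = x -> d = c.

Definition AG_property : Prop :=
  forall x y, ile (mul x y) (add (mul x x) (mul y y)).

Definition normal_incline (zero one : T) : Prop :=
  is_incline /\ commutative_incline /\
  (forall x, add zero x = x /\ add x zero = x) /\
  (forall x, mul one x = x /\ mul x one = x) /\
  LI_property /\ unique_sqrt_property /\ AG_property.

Variable zero : T.

Definition mx_mul_tr (n k : nat) (B C : 'I_n -> 'I_k -> T) : 'I_n -> 'I_n -> T :=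
  fun i j => \big[add/zero]_(l < k) mul (B i l) (C j l).

Definition is_square (x : T) : Prop := exists c, mul c c = x.

Definition cp_factorization (n k : nat) (A : 'I_n -> 'I_n -> T)
    (B : 'I_n -> 'I_k -> T) : Prop :=
  (forall i l, is_square (B i l)) /\ (forall i j, A i j = mx_mul_tr B B i j).

Definition completely_positive (n : nat) (A : 'I_n -> 'I_n -> T) : Prop :=
  exists k (B : 'I_n -> 'I_k -> T), cp_factorization A B.

Definition cp_rank_le (n : nat) (A : 'I_n -> 'I_n -> T) (m : nat) : Prop :=
  exists k (B : 'I_n -> 'I_k -> T), (k <= m)%N /\ cp_factorization A B.

End Incline.

From mathcomp Require Import all_boot fingroup perm.
Set Implicit Arguments. Unset Strict Implicit. Unset Printing Implicit Defensive.

(* In a totally ordered normal incline every element has a unique square root, so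
   x ⊗ x ≤ y ⊗ y forces x ≤ y.  If A = B B^T and s_i is the square root of a_ii, then
   b_il ≤ s_i, hence a_ij ≤ s_i s_j, and the LI-property writes a_ij = s_i s_j t_ij with
   t symmetric and t_ii = 1.  The lower triangular matrix with entries s_i t_il (l ≤ i)
   factors A as soon as t_il t_jl ≤ t_ij whenever l < j < i: its (i, j) entry is a join
   of terms bounded by s_i s_j t_ij, and the term l = j equals it.  For n = 2 there is no
   such triple; for n = 3 the only condition is t_20 t_10 ≤ t_21, which holds once the
   indices are transposed so that t_21 is the largest off-diagonal cofactor. *)

Section NormalIncline.
Variables (T : Type) (add mul : T -> T -> T) (zero one : T).
Hypothesis HL : normal_incline add mul zero one.

Local Notation "x ⊕ y" := (add x y) (at level 50, left associativity).
Local Notation "x ⊗ y" := (mul x y) (at level 40, left associativity).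
Local Notation "x ≤ y" := (ile add x y) (at level 70, no associativity).

Lemma addA : associative add. Proof. by case: HL => [[]]. Qed.
Lemma addC : commutative add. Proof. by case: HL => [[_ []]]. Qed.
Lemma addxx : idempotent_op add. Proof. by case: HL => [[_ [_ []]]]. Qed.
Lemma mulA : associative mul. Proof. by case: HL => [[_ [_ [_ []]]]]. Qed.
Lemma mulDr : right_distributive mul add.
Proof. by case: HL => [[_ [_ [_ [_ []]]]]]. Qed.
Lemma add_mul_absorb x y : x ⊕ x ⊗ y = x.
Proof. by case: HL => [[_ [_ [_ [_ [_ ]]]]]]. Qed.
Lemma mulC : commutative mul. Proof. by case: HL => [_ []]. Qed.
Lemma add0x : left_id zero add. Proof. by case: HL => [_ [_ [h _]]] x; case: (h x). Qed.
Lemma mul1x : left_id one mul. Proof. by case: HL => [_ [_ [_ [h _]]]] x; case: (h x). Qed.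
Lemma mulx1 : right_id one mul. Proof. by case: HL => [_ [_ [_ [h _]]]] x; case: (h x). Qed.

Lemma mulACA a b c d : a ⊗ b ⊗ (c ⊗ d) = a ⊗ c ⊗ (b ⊗ d).
Proof. by rewrite -!mulA (mulA b) (mulC b c) -mulA. Qed.

Lemma is_square_all x : is_square mul x.
Proof.
by case: HL => [_ [_ [_ [_ [_ [hsq _]]]]]]; case: (hsq x) => c [e _]; exists c.
Qed.

Lemma exists_sqrt_family (I : finType) (f : I -> T) :
  exists s : I -> T, forall i, s i ⊗ s i = f i.
Proof.
by apply: (@fin_all_exists _ (fun=> T) (fun i c => c ⊗ c = f i)) => i; apply: is_square_all.
Qed.

Lemma le_refl x : x ≤ x. Proof. exact: addxx. Qed.

Lemma le_trans y x z : x ≤ y -> y ≤ z -> x ≤ z.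
Proof. by rewrite /ile => xy yz; rewrite -yz addA xy. Qed.

Lemma le_anti x y : x ≤ y -> y ≤ x -> x = y.
Proof. by rewrite /ile => xy yx; rewrite -xy addC yx. Qed.

Lemma le0x x : zero ≤ x. Proof. exact: add0x. Qed.

Lemma lex1 x : x ≤ one.
Proof. by rewrite /ile addC -{1}(mul1x x) add_mul_absorb. Qed.

Lemma le_addl x y : x ≤ x ⊕ y.
Proof. by rewrite /ile addA addxx. Qed.

Lemma le_addr x y : y ≤ x ⊕ y.
Proof. by rewrite addC; apply: le_addl. Qed.

Lemma le_add_join x y z : x ≤ z -> y ≤ z -> x ⊕ y ≤ z.
Proof. by rewrite /ile => xz yz; rewrite -addA yz xz. Qed.

Lemma le_mull x y : x ⊗ y ≤ x.
Proof. by rewrite /ile addC add_mul_absorb. Qed.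

Lemma le_mulr x y : x ⊗ y ≤ y.
Proof. by rewrite mulC; apply: le_mull. Qed.

Lemma le_mul2l z x y : x ≤ y -> z ⊗ x ≤ z ⊗ y.
Proof. by rewrite /ile => xy; rewrite -mulDr xy. Qed.

Lemma le_mul2 x y u v : x ≤ y -> u ≤ v -> x ⊗ u ≤ y ⊗ v.
Proof.
move=> xy uv; apply: (le_trans (y := y ⊗ u)); last exact: le_mul2l.
by rewrite (mulC x) (mulC y); apply: le_mul2l.
Qed.

Lemma le_big (I : finType) (F : I -> T) i : F i ≤ \big[add/zero]_j F j.
Proof.
elim: (index_enum I) (mem_index_enum i) => // j r IH.
rewrite big_cons inE => /predU1P [-> | /IH]; first exact: le_addl.
by move/le_trans; apply; apply: le_addr.
Qed.

Lemma big_le (I : finType) (F : I -> T) b :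
  (forall i, F i ≤ b) -> \big[add/zero]_i F i ≤ b.
Proof.
move=> Fb; apply: (big_ind (fun x => x ≤ b)) => [|x y|i _]; last exact: Fb.
  exact: le0x.
exact: le_add_join.
Qed.

Lemma big_eq_attained (I : finType) (F : I -> T) i :
  (forall j, F j ≤ F i) -> \big[add/zero]_j F j = F i.
Proof. by move=> Fi; apply: le_anti; [apply: big_le | apply: le_big]. Qed.

(* By the LI-property the r-ideal generated by a is downward closed, and it lies in a ⊗ L. *)
Lemma le_dvd x a : x ≤ a -> exists c, x = a ⊗ c.
Proof.
case: HL => [_ [_ [_ [_ [hLI _]]]]] xa.
have [_ [_ downward]] := hLI a.
have gen_a : gen_r_ideal add mul a a by move=> J _.
apply: (downward a x gen_a xa (fun y => exists c, y = a ⊗ c)).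
  split; first by exists a, one; rewrite mulx1.
  split; first by move=> _ _ [c ->] [d ->]; exists (c ⊕ d); rewrite mulDr.
  move=> _ b [c ->]; split; exists (c ⊗ b); first by rewrite mulC -mulA.
  by rewrite mulA.
by exists one; rewrite mulx1.
Qed.

Hypothesis Htot : totally_ordered add.

Lemma le_of_sqr_le x y : x ⊗ x ≤ y ⊗ y -> x ≤ y.
Proof.
move=> le_sq; case: (Htot x y) => // yx.
have eq_sq : x ⊗ x = y ⊗ y by apply: le_anti => //; apply: le_mul2.
case: HL => [_ [_ [_ [_ [_ [hsq _]]]]]].
by have [c [_ uniq_c]] := hsq (y ⊗ y); rewrite (uniq_c x eq_sq) (uniq_c y) //; apply: le_refl.
Qed.

Lemma mx_mul_trC n k (B : 'I_n -> 'I_k -> T) i j :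
  mx_mul_tr add mul zero B B i j = mx_mul_tr add mul zero B B j i.
Proof. by apply: eq_bigr => l _; rewrite mulC. Qed.

Section Factorization.
Variables (n k : nat) (A : 'I_n -> 'I_n -> T) (B : 'I_n -> 'I_k -> T).
Hypothesis HB : forall i j, A i j = mx_mul_tr add mul zero B B i j.

Variable s : 'I_n -> T.
Hypothesis s_sqrt : forall i, s i ⊗ s i = A i i.

Lemma factor_le_sqrt i l : B i l ≤ s i.
Proof.
apply: le_of_sqr_le; rewrite s_sqrt HB.
exact: (le_big (fun l => B i l ⊗ B i l)).
Qed.

Lemma cp_entry_le i j : A i j ≤ s i ⊗ s j.
Proof. by rewrite HB; apply: big_le => l; apply: le_mul2; apply: factor_le_sqrt. Qed.

(* The cofactors are chosen entry by entry, so [t] is symmetrised by hand. *)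
Lemma cp_scaled_form : exists t : 'I_n -> 'I_n -> T,
  [/\ forall i j, t i j = t j i, forall i, t i i = one
    & forall i j, A i j = s i ⊗ s j ⊗ t i j].
Proof.
have /fin_all_exists [u hu] : forall i, exists ui : 'I_n -> T,
    forall j, A i j = s i ⊗ s j ⊗ ui j.
  move=> i; apply: (@fin_all_exists _ (fun=> T) (fun j c => A i j = s i ⊗ s j ⊗ c)) => j.
  exact/le_dvd/cp_entry_le.
exists (fun i j : 'I_n => if i == j then one else if (i < j)%N then u i j else u j i).
split=> [i j | i | i j]; rewrite ?eqxx // eq_sym.
  by case: ltngtP => // /val_inj ->.
case: eqP => [-> | _]; first by rewrite mulx1.
case: ltnP => // _.
by rewrite HB mx_mul_trC -HB hu (mulC (s j)).
Qed.

End Factorization.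

Definition lower_compatible n (t : 'I_n -> 'I_n -> T) :=
  forall l j i : 'I_n, (l < j < i)%N -> t i l ⊗ t j l ≤ t i j.

Section TriangularFactor.
Variables (n : nat) (s : 'I_n -> T) (t : 'I_n -> 'I_n -> T).
Hypotheses (tC : forall i j, t i j = t j i) (t_diag : forall i, t i i = one)
  (t_compat : lower_compatible t).

Definition tri_factor (i l : 'I_n) : T := if (l <= i)%N then s i ⊗ t i l else zero.

Lemma tri_factor_term (i j l : 'I_n) : (l <= j)%N -> (j <= i)%N ->
  tri_factor i l ⊗ tri_factor j l = s i ⊗ s j ⊗ (t i l ⊗ t j l).
Proof.
move=> lj ji; rewrite /tri_factor lj (leq_trans lj ji).
by rewrite mulACA.
Qed.

Lemma mx_mul_tr_tri_factor (i j : 'I_n) : (j <= i)%N ->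
  mx_mul_tr add mul zero tri_factor tri_factor i j = s i ⊗ s j ⊗ t i j.
Proof.
move=> ji; rewrite /mx_mul_tr (big_eq_attained (i := j)).
  by rewrite tri_factor_term // t_diag mulx1.
move=> l; rewrite (tri_factor_term (leqnn j) ji) t_diag mulx1.
case: (leqP l j) => [lj | jl]; last first.
  by rewrite {2}/tri_factor leqNgt jl; apply: le_trans (le_mulr _ _) (le0x _).
rewrite tri_factor_term //; apply: le_mul2l.
case: (ltngtP l j) lj => // [lj _ | /val_inj -> _]; last first.
  by rewrite t_diag mulx1; apply: le_refl.
case: (ltngtP j i) ji => // [ji _ | /val_inj -> _].
  by apply: t_compat; rewrite lj ji.
by rewrite t_diag; apply: lex1.
Qed.

Lemma tri_factorization (A : 'I_n -> 'I_n -> T) :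
  (forall i j, A i j = s i ⊗ s j ⊗ t i j) -> cp_rank_le add mul zero A n.
Proof.
move=> hA; exists n, tri_factor; split=> //; split=> [i l | i j].
  exact: is_square_all.
wlog ji : i j / (j <= i)%N => [wlog_ji |]; last by rewrite hA mx_mul_tr_tri_factor.
case: (leqP j i) => [/wlog_ji // | /ltnW /wlog_ji eq_ji].
by rewrite mx_mul_trC -eq_ji !hA tC (mulC (s i)).
Qed.

End TriangularFactor.

Lemma lower_compatible_2 (t : 'I_2 -> 'I_2 -> T) : lower_compatible t.
Proof. by move=> [[|[|?]] ?] [[|[|?]] ?] [[|[|?]] ?]. Qed.

Local Notation o0 := (@Ordinal 3 0 isT).
Local Notation o1 := (@Ordinal 3 1 isT).
Local Notation o2 := (@Ordinal 3 2 isT).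

Lemma ord3_chain (l j i : 'I_3) : (l < j < i)%N -> [/\ l = o0, j = o1 & i = o2].
Proof.
case: l j i => [[|[|[|?]]] p] [[|[|[|?]]] q] [[|[|[|?]]] r] //= _.
by rewrite (bool_irrelevance p isT) (bool_irrelevance q isT) (bool_irrelevance r isT).
Qed.

Lemma lower_compatible_3 (t : 'I_3 -> 'I_3 -> T) : (forall i j, t i j = t j i) ->
  exists x y : 'I_3, lower_compatible (fun i j => t (tperm x y i) (tperm x y j)).
Proof.
move=> tC.
have compat3 (t' : 'I_3 -> 'I_3 -> T) : t' o2 o0 ⊗ t' o1 o0 ≤ t' o2 o1 -> lower_compatible t'.
  by move=> h l j i /ord3_chain [-> -> ->].
have [le10_21 | le21_10] := Htot (t o1 o0) (t o2 o1).
  exists o0, o0; apply: compat3; rewrite tperm1 !perm1.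
  exact: le_trans (le_mulr _ _) le10_21.
have [le20_10 | le10_20] := Htot (t o2 o0) (t o1 o0).
  exists o0, o2; apply: compat3; rewrite tpermL tpermR tpermD // tC (tC o0 o1).
  exact: le_trans (le_mull _ _) le20_10.
exists o0, o1; apply: compat3; rewrite tpermL tpermR tpermD // (tC o0 o1).
exact: le_trans (le_mulr _ _) le10_20.
Qed.

End NormalIncline.

Lemma cp_rank_le_reindex T add mul (zero : T) n m (f : 'I_n -> 'I_m)
    (A : 'I_n -> 'I_n -> T) (A' : 'I_m -> 'I_m -> T) r :
  (forall i j, A i j = A' (f i) (f j)) -> cp_rank_le add mul zero A' r ->
  cp_rank_le add mul zero A r.
Proof.
move=> hA [k [B [kr [sqB hB]]]]; exists k, (fun i l => B (f i) l).
by split=> //; split=> [i l | i j]; rewrite ?hA.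
Qed.

Theorem mainTheorem5 (T : Type) (add mul : T -> T -> T) (zero one : T)
  (HL : normal_incline add mul zero one) (Htot : totally_ordered add)
  (n : nat) (Hn : n = 2 \/ n = 3) (A : 'I_n -> 'I_n -> T)
  (HA : completely_positive add mul zero A) :
  cp_rank_le add mul zero A n.
Proof.
have [k [B [_ HB]]] := HA.
have [s s_sqrt] := exists_sqrt_family HL (fun i => A i i).
have [t [tC t_diag hA]] := cp_scaled_form HL Htot HB s_sqrt.
case: Hn => En; subst n.
  exact: (tri_factorization HL tC t_diag (lower_compatible_2 add mul t) hA).
have [x [y compat]] := lower_compatible_3 HL Htot tC.
pose σ := tperm x y.
apply: (cp_rank_le_reindex (f := σ) (A' := fun i j => A (σ i) (σ j))).
  by move=> i j; rewrite !tpermK.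
exact: (tri_factorization HL (fun i j => tC (σ i) (σ j)) (fun i => t_diag (σ i))
  compat (fun i j => hA (σ i) (σ j))).
Qed.
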